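(* For $n>2$, the assignment $\eta(a_{ij}^0)=a_{ij}$ and $\eta(a_{ij}^1)=\tau_i a_{ij}\tau_i$ (for $i<j$) extends to a well-defined group homomorphism $\eta\colon G_{n,\mathcal{P}}^2\to G_{n,\mathcal{D}}^2$.
   Context: $G_{n,\mathcal{P}}^2$ has generators $a_{ij}^{\epsilon}=a_{\{i,j\}}^{\epsilon}$ ($\{i,j\}\subset\{1,\dots,n\}$, $i<j$, $\epsilon\in\{0,1\}$) and relations $(a_{ij}^\epsilon)^2=1$; $a_{ij}^{\epsilon}a_{kl}^{\epsilon'}=a_{kl}^{\epsilon'}a_{ij}^{\epsilon}$ for $\{i,j\}\cap\{k,l\}=\emptyset$; $a_{ij}^{\epsilon_{ij}}a_{ik}^{\epsilon_{ik}}a_{jk}^{\epsilon_{jk}}=a_{jk}^{\epsilon_{jk}}a_{ik}^{\epsilon_{ik}}a_{ij}^{\epsilon_{ij}}$ for distinct $i,j,k$ with $\epsilon_{ij}+\epsilon_{ik}+\epsilon_{jk}\equiv0\pmod 2$. $G_{n,\mathcal{D}}^2$ ($G_n^2$ with points) has generators $a_{ij}=a_{\{i,j\}}$ ($i<j$) and $\tau_i$ ($i\in\{1,\dots,n\}$) with relations: $a_{ij}^2=1$; $a_{ij}a_{kl}=a_{kl}a_{ij}$ for distinct $i,j,k,l$; $a_{ij}a_{ik}a_{jk}=a_{jk}a_{ik}a_{ij}$ for distinct $i,j,k$; $\tau_i^2=1$; $\tau_i\tau_j=\tau_j\tau_i$; $\tau_i\tau_ja_{ij}\tau_j\tau_i=a_{ij}$;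 $a_{ij}\tau_k=\tau_ka_{ij}$ for distinct $i,j,k$. *)

From mathcomp Require Import all_boot.
Set Implicit Arguments. Unset Strict Implicit. Unset Printing Implicit Defensive.

(* Words in generators X and their formal inverses: (x, false) is x,
   (x, true) is x^{-1}. The free group on X is word X modulo [eqv (fun _ _ => False)]. *)
Definition word (X : Type) := seq (X * bool).

Definition gl {X : Type} (x : X) : word X := [:: (x, false)].

Definition winv {X : Type} (w : word X) : word X :=
  rev (map (fun l => (l.1, ~~ l.2)) w).

(* Congruence on words generated by the relations R and free cancellation:
   word X / eqv R is the group presented by <X | R>. *)
Inductive eqv {X : Type} (R : word X -> word X -> Prop) : word X -> word X -> Prop :=
| eqv_rel u v : R u v -> eqv R u v
| eqv_refl u : eqv R u u
| eqv_sym u v : eqv R u v -> eqv R v u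
| eqv_trans u v w : eqv R u v -> eqv R v w -> eqv R u w
| eqv_cat u u' v v' : eqv R u u' -> eqv R v v' -> eqv R (u ++ v) (u' ++ v')
| eqv_cancel x b : eqv R [:: (x, b); (x, ~~ b)] [::].

(* Substitution of generators by words: the monoid map on words induced by
   f; it induces a group homomorphism of the presented groups iff it maps
   equivalent words to equivalent words. *)
Definition wsubst {X Y : Type} (f : X -> word Y) (w : word X) : word Y :=
  flatten (map (fun l => if l.2 then winv (f l.1) else f l.1) w).

(* two-element subsets {i,j} of {1..n} (here 'I_n) *)
Definition pair2 (n : nat) := {A : {set 'I_n} | #|A| == 2}.

(* Generators of G^2_{n,P}: a_{ij}^eps, eps in {0,1} (false = 0, true = 1) *)
Definition genP (n : nat) := (pair2 n * bool)%type.

Inductive relP (n : nat) : word (genP n) -> word (genP n) -> Prop :=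
| relP_sq (p : pair2 n) (e : bool) :
    relP (gl (p, e) ++ gl (p, e)) [::]
| relP_comm (p q : pair2 n) (e e' : bool) :
    [disjoint val p & val q] ->
    relP (gl (p, e) ++ gl (q, e')) (gl (q, e') ++ gl (p, e))
| relP_tri (p q r : pair2 n) (i j k : 'I_n) (eij eik ejk : bool) :
    i != j -> i != k -> j != k ->
    val p = [set i; j] -> val q = [set i; k] -> val r = [set j; k] ->
    ~~ odd (eij + eik + ejk) ->
    relP (gl (p, eij) ++ gl (q, eik) ++ gl (r, ejk))
         (gl (r, ejk) ++ gl (q, eik) ++ gl (p, eij)).

(* Generators of G^2_{n,D}: a_{ij} (inl) and tau_i (inr) *)
Definition genD (n : nat) := (pair2 n + 'I_n)%type.

Definition aD {n : nat} (p : pair2 n) : word (genD n) := gl (inl p).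
Definition tD {n : nat} (i : 'I_n) : word (genD n) := gl (inr i).

Inductive relD (n : nat) : word (genD n) -> word (genD n) -> Prop :=
| relD_sq (p : pair2 n) : relD (aD p ++ aD p) [::]
| relD_comm (p q : pair2 n) :
    [disjoint val p & val q] -> relD (aD p ++ aD q) (aD q ++ aD p)
| relD_tri (p q r : pair2 n) (i j k : 'I_n) :
    i != j -> i != k -> j != k ->
    val p = [set i; j] -> val q = [set i; k] -> val r = [set j; k] ->
    relD (aD p ++ aD q ++ aD r) (aD r ++ aD q ++ aD p)
| relD_tsq (i : 'I_n) : relD (tD i ++ tD i) [::]
| relD_tcomm (i j : 'I_n) : relD (tD i ++ tD j) (tD j ++ tD i)
| relD_tat (p : pair2 n) (i j : 'I_n) :
    (i < j)%N -> val p = [set i; j] ->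
    relD (tD i ++ tD j ++ aD p ++ tD j ++ tD i) (aD p)
| relD_at (p : pair2 n) (k : 'I_n) :
    k \notin val p -> relD (aD p ++ tD k) (tD k ++ aD p).

(* Since eta is defined generator by generator, it suffices that eta maps
   every defining relation of G^2_{n,P} to a consequence of the relations of
   G^2_{n,D}. The key observation is that tau_i tau_j commutes with a_ij, so
   tau_i a_ij tau_i = tau_j a_ij tau_j: the image of a_ij^1 may be written as
   a conjugate by tau_x for either endpoint x of {i,j}. Choosing x well, the
   conjugations in the image of a relation cancel against each other or commute
   past the letters a_pq with x outside {p,q}, reducing it to a relation of
   G^2_n. In the triangle relation the parity condition leaves exactly the
   cases where two or none of the letters are conjugated, and the two
   conjugated letters share an index x lying outside the third pair. *)
From mathcomp Require Import all_boot.
Set Implicit Arguments. Unset Strict Implicit. Unset Printing Implicit Defensive.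

Section Words.
Variables (X : Type) (R : word X -> word X -> Prop).

Lemma eqv_ctx (l u v r : word X) : eqv R u v -> eqv R (l ++ u ++ r) (l ++ v ++ r).
Proof. by move=> Huv; do !apply: eqv_cat => //; apply: eqv_refl. Qed.

Lemma eqv_cat3 (u u' v v' w w' : word X) :
  eqv R u u' -> eqv R v v' -> eqv R w w' -> eqv R (u ++ v ++ w) (u' ++ v' ++ w').
Proof. by move=> Hu Hv Hw; do !apply: eqv_cat. Qed.

Lemma winvK : involutive (@winv X).
Proof.
move=> w; rewrite /winv map_rev revK -map_comp -[RHS]map_id.
by apply: eq_map => -[x b] /=; rewrite negbK.
Qed.

Lemma eqv_cat_winv (w : word X) : eqv R (w ++ winv w) [::].
Proof.
elim: w => [|[x b] w IHw]; first exact: eqv_refl.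
rewrite /winv /= rev_cons -cats1 -/(winv w).
apply: eqv_trans (eqv_cancel R x b).
by have := eqv_ctx [:: (x, b)] [:: (x, ~~ b)] IHw; rewrite /= -catA.
Qed.

Lemma eqv_winv_cat (w : word X) : eqv R (winv w ++ w) [::].
Proof. by have := eqv_cat_winv (winv w); rewrite winvK. Qed.

End Words.

Lemma wsubst_cat X Y (f : X -> word Y) (u v : word X) :
  wsubst f (u ++ v) = wsubst f u ++ wsubst f v.
Proof. by rewrite /wsubst map_cat flatten_cat. Qed.

Lemma wsubst_gl X Y (f : X -> word Y) (x : X) : wsubst f (gl x) = f x.
Proof. by rewrite /wsubst /= cats0. Qed.

Lemma eqv_wsubst X Y (R : word X -> word X -> Prop) (S : word Y -> word Y -> Prop)
    (f : X -> word Y) :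
  (forall u v, R u v -> eqv S (wsubst f u) (wsubst f v)) ->
  forall u v, eqv R u v -> eqv S (wsubst f u) (wsubst f v).
Proof.
move=> fR u v; elim=> {u v}
  [u v /fR //|u|u v _|u v w _ IHuv _ IHvw|u u' v v' _ IHu _ IHv|x b].
- exact: eqv_refl.
- exact: eqv_sym.
- exact: eqv_trans IHuv IHvw.
- by rewrite !wsubst_cat; apply: eqv_cat.
- by case: b; rewrite /wsubst /= cats0; [apply: eqv_winv_cat | apply: eqv_cat_winv].
Qed.

Lemma pair2_set2 n (p : pair2 n) : exists i j, i != j /\ val p = [set i; j].
Proof. by apply/cards2P; exact: (valP p). Qed.

Lemma pair2_elem n (p : pair2 n) : exists x, x \in val p.
Proof. by have [x [y [_ ->]]] := pair2_set2 p; exists x; rewrite set21. Qed.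

Lemma pair2_ltn n (p : pair2 n) : exists i j : 'I_n, (i < j)%N /\ val p = [set i; j].
Proof.
have [i [j [neq_ij ->]]] := pair2_set2 p.
case: (ltngtP i j) => [lt_ij|lt_ji|/val_inj eq_ij].
- by exists i, j.
- by exists j, i; rewrite setUC.
- by rewrite eq_ij eqxx in neq_ij.
Qed.

Tactic Notation "eqv_at" uconstr(l) uconstr(H) :=
  refine (eqv_trans (eqv_ctx l _ H) _); rewrite /=.

Section RelationsD.
Variable n : nat.
Local Notation E := (eqv (@relD n)).
Local Notation α p := (@inl (pair2 n) 'I_n p, false).
Local Notation τ x := (@inr (pair2 n) 'I_n x, false).

Lemma eqvD_aa p : E [:: α p; α p] [::].
Proof. exact/eqv_rel/relD_sq. Qed.

Lemma eqvD_tt x : E [:: τ x; τ x] [::].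
Proof. exact/eqv_rel/relD_tsq. Qed.

Lemma eqvD_nil_tt x : E [::] [:: τ x; τ x].
Proof. exact/eqv_sym/eqvD_tt. Qed.

Lemma eqvD_aaC (p q : pair2 n) :
  [disjoint val p & val q] -> E [:: α p; α q] [:: α q; α p].
Proof. by move=> dpq; apply/eqv_rel/relD_comm. Qed.

Lemma eqvD_ttC x y : E [:: τ x; τ y] [:: τ y; τ x].
Proof. exact/eqv_rel/relD_tcomm. Qed.

Lemma eqvD_atC (p : pair2 n) x : x \notin val p -> E [:: α p; τ x] [:: τ x; α p].
Proof. by move=> xNp; apply/eqv_rel/relD_at. Qed.

Lemma eqvD_taC (p : pair2 n) x : x \notin val p -> E [:: τ x; α p] [:: α p; τ x].
Proof. by move=> xNp; apply/eqv_sym/eqvD_atC. Qed.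

Lemma eqvD_conj_swap (p : pair2 n) (i j : 'I_n) : (i < j)%N -> val p = [set i; j] ->
  E [:: τ i; α p; τ i] [:: τ j; α p; τ j].
Proof.
move=> lt_ij def_p.
eqv_at [:: τ i] (eqv_sym (eqv_rel (relD_tat lt_ij def_p))).
eqv_at [::] (eqvD_tt i).
eqv_at [:: τ j; α p; τ j] (eqvD_tt i).
exact: eqv_refl.
Qed.

Lemma eqvD_conjC (p q : pair2 n) x : x \notin val q -> [disjoint val p & val q] ->
  E [:: τ x; α p; τ x; α q] [:: α q; τ x; α p; τ x].
Proof.
move=> xNq dpq.
eqv_at [:: τ x; α p] (eqvD_taC xNq).
eqv_at [:: τ x] (eqvD_aaC dpq).
eqv_at [::] (eqvD_taC xNq).
exact: eqv_refl.
Qed.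

Lemma eqvD_conj2_shuffle (p q : pair2 n) x y : x \notin val q -> y \notin val p ->
  E [:: τ x; α p; τ x; τ y; α q; τ y] [:: τ x; τ y; α p; α q; τ x; τ y].
Proof.
move=> xNq yNp.
eqv_at [:: τ x; α p] (eqvD_ttC x y).
eqv_at [:: τ x; α p; τ y] (eqvD_taC xNq).
eqv_at [:: τ x] (eqvD_atC yNp).
exact: eqv_refl.
Qed.

Lemma eqvD_conj2C (p q : pair2 n) x y :
  x \notin val q -> y \notin val p -> [disjoint val p & val q] ->
  E [:: τ x; α p; τ x; τ y; α q; τ y] [:: τ y; α q; τ y; τ x; α p; τ x].
Proof.
move=> xNq yNp dpq.
apply: eqv_trans (eqvD_conj2_shuffle xNq yNp) _.
eqv_at [::] (eqvD_ttC x y).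
eqv_at [:: τ y; τ x] (eqvD_aaC dpq).
eqv_at [:: τ y; τ x; α q; α p] (eqvD_ttC x y).
exact/eqv_sym/eqvD_conj2_shuffle.
Qed.

Section Triangle.
Variables (p q r : pair2 n).
Hypothesis tri_pqr : E [:: α p; α q; α r] [:: α r; α q; α p].

Lemma eqvD_tri_conj12 x : x \notin val r ->
  E [:: τ x; α p; τ x; τ x; α q; τ x; α r] [:: α r; τ x; α q; τ x; τ x; α p; τ x].
Proof.
move=> xNr.
eqv_at [:: τ x; α p] (eqvD_tt x).
eqv_at [:: τ x; α p; α q] (eqvD_taC xNr).
eqv_at [:: τ x] tri_pqr.
eqv_at [::] (eqvD_taC xNr).
eqv_at [:: α r; τ x; α q] (eqvD_nil_tt x).
exact: eqv_refl.
Qed.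

Lemma eqvD_tri_conj13 x : x \notin val q ->
  E [:: τ x; α p; τ x; α q; τ x; α r; τ x] [:: τ x; α r; τ x; α q; τ x; α p; τ x].
Proof.
move=> xNq.
eqv_at [:: τ x; α p] (eqvD_taC xNq).
eqv_at [:: τ x; α p; α q] (eqvD_tt x).
eqv_at [:: τ x] tri_pqr.
eqv_at [:: τ x; α r] (eqvD_nil_tt x).
eqv_at [:: τ x; α r; τ x] (eqvD_taC xNq).
exact: eqv_refl.
Qed.

Lemma eqvD_tri_conj23 x : x \notin val p ->
  E [:: α p; τ x; α q; τ x; τ x; α r; τ x] [:: τ x; α r; τ x; τ x; α q; τ x; α p].
Proof.
move=> xNp.
eqv_at [:: α p; τ x; α q] (eqvD_tt x).
eqv_at [::] (eqvD_atC xNp).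
eqv_at [:: τ x] tri_pqr.
eqv_at [:: τ x; α r] (eqvD_nil_tt x).
eqv_at [:: τ x; α r; τ x; τ x; α q] (eqvD_atC xNp).
exact: eqv_refl.
Qed.

End Triangle.

Section Eta.
Variable eta : genP n -> word (genD n).
Hypothesis eta0 : forall p : pair2 n, eta (p, false) = aD p.
Hypothesis eta1 : forall (p : pair2 n) (i j : 'I_n), (i < j)%N -> val p = [set i; j] ->
  eta (p, true) = tD i ++ aD p ++ tD i.

Definition eta_at (x : 'I_n) (p : pair2 n) (e : bool) : word (genD n) :=
  if e then [:: τ x; α p; τ x] else [:: α p].

Lemma eqv_eta_at (p : pair2 n) (e : bool) x : x \in val p -> E (eta (p, e)) (eta_at x p e).
Proof.
case: e => /= xp; last by rewrite eta0; apply: eqv_refl.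
have [i [j [lt_ij def_p]]] := pair2_ltn p.
rewrite (eta1 lt_ij def_p).
move: xp; rewrite def_p => /set2P[->|->]; first exact: eqv_refl.
exact: eqvD_conj_swap.
Qed.

Lemma eqv_eta_sq (p : pair2 n) e : E (wsubst eta (gl (p, e) ++ gl (p, e))) [::].
Proof.
have [x xp] := pair2_elem p.
rewrite wsubst_cat wsubst_gl.
apply: eqv_trans (eqv_cat (eqv_eta_at e xp) (eqv_eta_at e xp)) _.
case: e => /=; last exact: eqvD_aa.
eqv_at [:: τ x; α p] (eqvD_tt x).
eqv_at [:: τ x] (eqvD_aa p).
exact: eqvD_tt.
Qed.

Lemma eqv_eta_comm (p q : pair2 n) e e' : [disjoint val p & val q] ->
  E (wsubst eta (gl (p, e) ++ gl (q, e'))) (wsubst eta (gl (q, e') ++ gl (p, e))).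
Proof.
move=> dpq; have dqp : [disjoint val q & val p] by rewrite disjoint_sym.
have [x xp] := pair2_elem p.
have [y yq] := pair2_elem q.
have xNq : x \notin val q by rewrite (disjointFr dpq xp).
have yNp : y \notin val p by rewrite (disjointFl dpq yq).
rewrite !wsubst_cat !wsubst_gl.
apply: eqv_trans (eqv_cat (eqv_eta_at e xp) (eqv_eta_at e' yq)) _.
apply: eqv_trans _ (eqv_sym (eqv_cat (eqv_eta_at e' yq) (eqv_eta_at e xp))).
case: e; case: e' => /=.
- exact: eqvD_conj2C xNq yNp dpq.
- exact: eqvD_conjC xNq dpq.
- exact/eqv_sym/(eqvD_conjC yNp dqp).
- exact: eqvD_aaC dpq.
Qed.

Lemma eqv_eta_tri (p q r : pair2 n) (i j k : 'I_n) (eij eik ejk : bool) :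
  i != j -> i != k -> j != k ->
  val p = [set i; j] -> val q = [set i; k] -> val r = [set j; k] ->
  ~~ odd (eij + eik + ejk) ->
  E (wsubst eta (gl (p, eij) ++ gl (q, eik) ++ gl (r, ejk)))
    (wsubst eta (gl (r, ejk) ++ gl (q, eik) ++ gl (p, eij))).
Proof.
move=> neq_ij neq_ik neq_jk def_p def_q def_r even_e.
have tri : E [:: α p; α q; α r] [:: α r; α q; α p]
  := eqv_rel (relD_tri neq_ij neq_ik neq_jk def_p def_q def_r).
have ip : i \in val p by rewrite def_p set21.
have jp : j \in val p by rewrite def_p set22.
have iq : i \in val q by rewrite def_q set21.
have kq : k \in val q by rewrite def_q set22.
have jr : j \in val r by rewrite def_r set21.
have kr : k \in val r by rewrite def_r set22.
have iNr : i \notin val r by rewrite def_r !inE negb_or neq_ij neq_ik.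
have jNq : j \notin val q by rewrite def_q !inE negb_or eq_sym neq_ij neq_jk.
have kNp : k \notin val p by rewrite def_p !inE negb_or !(eq_sym k) neq_ik neq_jk.
rewrite !wsubst_cat !wsubst_gl.
suff [a [b [c [ap bq cr tri_abc]]]] : exists a b c,
    [/\ a \in val p, b \in val q, c \in val r &
      E (eta_at a p eij ++ eta_at b q eik ++ eta_at c r ejk)
        (eta_at c r ejk ++ eta_at b q eik ++ eta_at a p eij)].
  apply: eqv_trans (eqv_cat3 (eqv_eta_at _ ap) (eqv_eta_at _ bq) (eqv_eta_at _ cr)) _.
  apply: eqv_trans tri_abc _.
  by apply/eqv_sym/eqv_cat3; apply: eqv_eta_at.
move: even_e; case: eij; case: eik; case: ejk => //= _.
- by exists i, i, j; split=> //; exact (eqvD_tri_conj12 tri iNr).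
- by exists j, i, j; split=> //; exact (eqvD_tri_conj13 tri jNq).
- by exists j, k, k; split=> //; exact (eqvD_tri_conj23 tri kNp).
- by exists j, k, k; split=> //; exact tri.
Qed.

Lemma eqv_eta_relP u v : relP u v -> E (wsubst eta u) (wsubst eta v).
Proof.
case=> [p e|p q e e' dpq|p q r i j k eij eik ejk neq_ij neq_ik neq_jk].
- exact: eqv_eta_sq.
- exact: eqv_eta_comm.
- exact: eqv_eta_tri neq_ij neq_ik neq_jk.
Qed.

End Eta.
End RelationsD.

Theorem mainTheorem4 (n : nat) (hn : (2 < n)%N)
  (eta : genP n -> word (genD n))
  (eta0 : forall p : pair2 n, eta (p, false) = aD p)
  (eta1 : forall (p : pair2 n) (i j : 'I_n), (i < j)%N -> val p = [set i; j] ->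
            eta (p, true) = tD i ++ aD p ++ tD i) :
  forall u v : word (genP n),
    eqv (@relP n) u v -> eqv (@relD n) (wsubst eta u) (wsubst eta v).
Proof. exact: eqv_wsubst (eqv_eta_relP eta0 eta1). Qed.
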